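(* Let $1\le k\le n$ and let $Q_{n,k}(T)=\sum_{i=k}^n(-1)^{i-k}\binom{n}{i}T^i$ be the numerator polynomial of the standard graded Hilbert series of $M(n,k)$ (so $H_{M(n,k)}(T)=Q_{n,k}(T)/(1-T)^n$). Then for every integer $s\ge0$, as formal power series in $T$, $$\frac{Q_{n,k}(T)}{(1-T)^s}=\sum_{j=0}^\infty\left((-1)^j\binom{n-s}{k+j}+\sum_{t=1}^s\binom{n-t}{k-1}\binom{s-t+j}{s-t}\right)T^{j+k}$$ $$=\sum_{j=0}^\infty\left((-1)^j\binom{n-s}{k+j}+\sum_{\ell=0}^{k-1}\binom{j+\ell}{\ell}\binom{n-s-j-\ell-1}{k-\ell-1}\binom{s+j+\ell}{s-1}\right)T^{j+k}.$$
   Context: $M(n,k)$ is the $k$-th syzygy module of $K=R/(X_1,\dots,X_n)$, $R=K[X_1,\dots,X_n]$ with the standard grading, in the Koszul complex: the image of $\partial:\bigwedge^kR^n\to\bigwedge^{k-1}R^n$, where $e_{i_1}\wedge\dots\wedge e_{i_k}$ has degree $k$. Binomial coefficients $\binom{a}{b}$ are taken for integer $a$ and integer $b$ as $a(a-1)\cdots(a-b+1)/b!$ if $b\ge0$ and $0$ if $b<0$. *)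

From mathcomp Require Import all_boot all_order all_algebra.
Set Implicit Arguments. Unset Strict Implicit. Unset Printing Implicit Defensive.
Import Order.TTheory GRing.Theory Num.Theory.
Local Open Scope ring_scope.

Definition binZ (a b : int) : rat :=
  if b < 0 then 0
  else (\prod_(i < absz b) (a - (i : nat)%:Z)%:~R) / ((absz b)`!)%:R.

Definition fps := nat -> rat.

Definition fps_mul (f g : fps) : fps :=
  fun m => \sum_(i < m.+1) f i * g (m - i)%N.

Definition fps_of_poly (p : {poly rat}) : fps := fun m => p`_m.

Definition Qnk (n k : nat) : {poly rat} :=
  \sum_(k <= i < n.+1) (((-1) ^+ (i - k)) * ('C(n, i))%:R) *: 'X^i.

Definition shift_series (k : nat) (c : nat -> rat) : fps :=
  fun m => if (m < k)%N then 0 else c (m - k)%N.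

(* Multiplying a series by 1 - T takes backward differences of its coefficients, and
   by Pascal's rule for the generalized binomials the coefficients for exponent s + 1
   difference to those for exponent s; for s = 0 they are the coefficients of
   Q_{n,k}.  For the second form, write binom(n-t, k-1) as a Vandermonde-type
   convolution indexed by l, exchange the sums over t and l, and sum over t by the
   hockey-stick identity. *)
From mathcomp Require Import all_boot all_order all_algebra.
From mathcomp Require Import ring zify.
From Stdlib Require Import FunctionalExtensionality.
Import Order.TTheory GRing.Theory Num.Theory.
Local Open Scope ring_scope.

Lemma binZE (a : int) (m : nat) :
  binZ a m = (\prod_(i < m) (a - (i : nat)%:Z)%:~R) / (m`!)%:R.
Proof. by []. Qed.

Lemma binZ_lt0 (a b : int) : b < 0 -> binZ a b = 0.
Proof. by rewrite /binZ => ->. Qed.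

Lemma binZ0 (a : int) : binZ a 0 = 1.
Proof. by rewrite binZE big_ord0 divr1. Qed.

Lemma binZ_pascal (a : int) (m : nat) :
  binZ (a + 1) m.+1 = binZ a m.+1 + binZ a m.
Proof.
rewrite !binZE big_ord_recl big_ord_recr /=.
rewrite (eq_bigr (fun i : 'I_m => (a - (i : nat)%:Z)%:~R)); last first.
  by move=> i _; congr (_%:~R); rewrite /bump /= add1n -addn1 PoszD; ring.
have fact_neq0 : (m`!)%:R != 0 :> rat by rewrite pnatr_eq0 -lt0n fact_gt0.
have Sm_neq0 : 1 + m%:R != 0 :> rat by rewrite addrC natr1 pnatr_eq0.
rewrite factS natrM !rmorphB !rmorphD /= subr0 rmorph1.
by field; rewrite fact_neq0 Sm_neq0.
Qed.

Lemma binZ_natE (a b : nat) : binZ a b = ('C(a, b))%:R.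
Proof.
elim: a b => [|a IH] [|b].
- by rewrite binZ0 bin0.
- by rewrite binZE big_ord_recl /= subr0 !mul0r bin0n.
- by rewrite binZ0 bin0.
- by rewrite -addn1 PoszD binZ_pascal !IH addn1 binS natrD addrC.
Qed.

Lemma sum_binZ_diag (p : nat) (v : int) :
  \sum_(l < p.+1) binZ (v - (l : nat)%:Z) (p - l)%N = binZ (v + 1) p.
Proof.
elim: p v => [|p IH] v; first by rewrite big_ord_recl big_ord0 addr0 !binZ0.
rewrite big_ord_recl /= subr0 subn0.
rewrite (eq_bigr (fun i : 'I_p.+1 => binZ (v - 1 - (i : nat)%:Z) (p - i)%N)); last first.
  by move=> i _; rewrite /bump leq0n add1n subSS -addn1 PoszD opprD addrA addrAC.
by rewrite IH subrK -binZ_pascal.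
Qed.

Lemma binZ_vandermonde (u p : nat) (v : int) :
  \sum_(l < p.+1) ('C(u + l, l))%:R * binZ (v - (l : nat)%:Z) (p - l)%N
  = binZ (u%:Z + v + 1) p.
Proof.
elim: u p v => [|u IHu] p v.
  by rewrite add0r -sum_binZ_diag; apply: eq_bigr => i _; rewrite add0n binn mul1r.
elim: p v => [|p IHp] v; first by rewrite big_ord_recl big_ord0 addr0 !binZ0 bin0 mulr1.
have -> : binZ (u.+1%:Z + v + 1) p.+1
          = binZ (u%:Z + v + 1) p.+1 + binZ (u.+1%:Z + (v - 1) + 1) p.
  have -> : u.+1%:Z + (v - 1) + 1 = u%:Z + v + 1 by rewrite -addn1 PoszD; ring.
  have -> : u.+1%:Z + v + 1 = (u%:Z + v + 1) + 1 by rewrite -addn1 PoszD; ring.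
  by rewrite binZ_pascal.
rewrite -IHu -IHp big_ord_recl [X in _ = X + _]big_ord_recl -addrA.
congr (_ + _); first by rewrite !addn0 !bin0.
rewrite -big_split; apply: eq_bigr => i _ /=.
rewrite /bump leq0n !add1n subSS.
have -> : v - (i.+1)%:Z = v - 1 - (i : nat)%:Z by rewrite -addn1 PoszD; ring.
by rewrite addSn binS natrD mulrDl addnS addSn.
Qed.

Lemma bin_fact_ratE (n m : nat) : (m <= n)%N ->
  ('C(n, m))%:R = (n`!)%:R / ((m`!)%:R * ((n - m)`!)%:R) :> rat.
Proof.
move=> le_mn; rewrite -(bin_fact le_mn) !natrM.
have fact_neq0 x : (x`!)%:R != 0 :> rat by rewrite pnatr_eq0 -lt0n fact_gt0.
by field; rewrite !fact_neq0.
Qed.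

Lemma mul_bin_trinomial (a j l : nat) :
  ('C(a + j, a) * 'C(a + j + l, l) = 'C(j + l, l) * 'C(a + j + l, a))%N.
Proof.
apply/eqP; rewrite -(eqr_nat rat) !natrM; apply/eqP.
rewrite !bin_fact_ratE ?leq_addl ?leq_addr //; last by rewrite -addnA leq_addr.
rewrite addnK addKn addnK -addnA addKn.
have fact_neq0 x : (x`!)%:R != 0 :> rat by rewrite pnatr_eq0 -lt0n fact_gt0.
by field; rewrite !fact_neq0.
Qed.

Lemma bin_hockey_stick (s m : nat) :
  (\sum_(a < s.+1) 'C(a + m, a) = 'C(s.+1 + m, s))%N.
Proof.
elim: s => [|s IH]; first by rewrite big_ord_recl big_ord0 !bin0.
by rewrite big_ord_recr /= IH [in RHS]addSn binS addnC.
Qed.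

Lemma sum_nat1_rev (F : nat -> rat) (s : nat) :
  \sum_(1 <= t < s.+1) F t = \sum_(a < s) F (s - a)%N.
Proof.
rewrite big_nat_rev big_add1 /= big_mkord; apply: eq_bigr => i _.
by congr F; lia.
Qed.

Section TailSum.
Variables n k s j : nat.

Let v : int := n%:Z - s.+1%:Z - j%:Z - 1.

Lemma tail_sum_double :
  \sum_(1 <= t < s.+2)
     binZ (n%:Z - t%:Z) k * binZ (s.+1%:Z - t%:Z + j%:Z) (s.+1%:Z - t%:Z)
  = \sum_(a < s.+1) \sum_(l < k.+1)
     ('C(a + j + l, l) * 'C(a + j, a))%:R * binZ (v - l%:Z) (k - l)%N.
Proof.
rewrite sum_nat1_rev; apply: eq_bigr => a _.
have le_as : (a <= s.+1)%N by apply: ltnW.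
have -> : s.+1%:Z - (s.+1 - a)%N%:Z = a by rewrite -subzn //; ring.
have -> : n%:Z - (s.+1 - a)%N%:Z = (a + j)%N%:Z + v + 1.
  by rewrite -subzn // !PoszD /v; ring.
rewrite -PoszD binZ_natE -binZ_vandermonde mulr_suml.
by apply: eq_bigr => l _; rewrite natrM mulrAC.
Qed.

Lemma tail_sum_swap :
  \sum_(1 <= t < s.+2)
     binZ (n%:Z - t%:Z) k * binZ (s.+1%:Z - t%:Z + j%:Z) (s.+1%:Z - t%:Z)
  = \sum_(l < k.+1) ('C(j + l, l) * 'C(s.+1 + (j + l), s))%:R
     * binZ (v - l%:Z) (k - l)%N.
Proof.
rewrite tail_sum_double exchange_big /=; apply: eq_bigr => l _.
rewrite -mulr_suml -natr_sum; congr (_%:R * _).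
under eq_bigr => a _ do rewrite mulnC mul_bin_trinomial -addnA.
by rewrite -big_distrr /= bin_hockey_stick.
Qed.

End TailSum.

Lemma tail_sum_alt (n k s j : nat) : (1 <= k)%N ->
  \sum_(1 <= t < s.+1)
     binZ (n%:Z - t%:Z) (k%:Z - 1) * binZ (s%:Z - t%:Z + j%:Z) (s%:Z - t%:Z)
  = \sum_(0 <= l < k)
     binZ (j%:Z + l%:Z) l%:Z
     * binZ (n%:Z - s%:Z - j%:Z - l%:Z - 1) (k%:Z - l%:Z - 1)
     * binZ (s%:Z + j%:Z + l%:Z) (s%:Z - 1).
Proof.
case: k => [//|k] _; case: s => [|s].
  by rewrite big_geq // big1 // => l _; rewrite [X in _ * X]binZ_lt0 ?mulr0.
have -> : Posz k.+1 - 1 = k by rewrite -addn1 PoszD addrK.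
rewrite tail_sum_swap big_mkord; apply: eq_bigr => -[l /=]; rewrite ltnS => le_lk _.
have -> : Posz k.+1 - l%:Z - 1 = (k - l)%N.
  by rewrite -subzn // -[k.+1]addn1 PoszD; ring.
have -> : Posz s.+1 - 1 = s by rewrite -addn1 PoszD addrK.
rewrite -!PoszD !binZ_natE natrM -addnA.
by rewrite [RHS]mulrAC; congr (_ * binZ _ _); ring.
Qed.

Lemma coef_Qnk (n k m : nat) :
  (Qnk n k)`_m = if (m < k)%N then 0 else (-1) ^+ (m - k) * ('C(n, m))%:R.
Proof.
rewrite /Qnk coef_sum.
under eq_bigr => i _ do rewrite coefZ coefXn.
case: (ltnP m k) => [lt_mk | le_km].
  rewrite big_nat_cond big1 // => i /andP[/andP[le_ki _] _].
  by rewrite (_ : (m == i) = false) ?mulr0 //; apply/negbTE; lia.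
case: (leqP m n) => [le_mn | lt_nm].
  rewrite (bigD1_seq m) ?mem_index_iota ?iota_uniq //=; last by lia.
  rewrite eqxx mulr1 big1 ?addr0 // => i ne_im.
  by rewrite eq_sym (negbTE ne_im) mulr0.
rewrite bin_small // mulr0 big_nat_cond big1 // => i /andP[/andP[_ lt_in] _].
by rewrite (_ : (m == i) = false) ?mulr0 //; apply/negbTE; lia.
Qed.

Definition fps_diff (f : fps) : fps :=
  fun m => f m - (if (0 < m)%N then f m.-1 else 0).

Lemma fps_mul1l (f : fps) : fps_mul (fps_of_poly 1) f = f.
Proof.
apply: functional_extensionality => m.
rewrite /fps_mul big_ord_recl /fps_of_poly coef1 /= mul1r subn0 big1 ?addr0 //.
by move=> i _; rewrite coef1 mul0r.
Qed.

Lemma fps_mul_1subX (p : {poly rat}) (f : fps) :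
  fps_mul (fps_of_poly (p * (1 - 'X))) f = fps_mul (fps_of_poly p) (fps_diff f).
Proof.
apply: functional_extensionality => m; rewrite /fps_mul /fps_of_poly /fps_diff.
under eq_bigr => i _ do rewrite mulrBr mulr1 coefB coefMX mulrBl.
under [RHS]eq_bigr => i _ do rewrite mulrBr.
rewrite !sumrB; congr (_ - _).
rewrite big_ord_recl /= mul0r add0r big_ord_recr /= subnn /= mulr0 addr0.
apply: eq_bigr => i _; rewrite subn_gt0 ltn_ord add0n.
by congr (_ * f _); rewrite /bump /= add1n; lia.
Qed.

Definition quot_coef (n k s j : nat) : rat :=
  (-1) ^+ j * binZ (n%:Z - s%:Z) (k%:Z + j%:Z)
  + \sum_(1 <= t < s.+1)
      binZ (n%:Z - t%:Z) (k%:Z - 1) * binZ (s%:Z - t%:Z + j%:Z) (s%:Z - t%:Z).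

Lemma quot_coefE (n k s j : nat) : quot_coef n k s j =
  (-1) ^+ j * binZ (n%:Z - s%:Z) (k + j)%N
  + \sum_(1 <= t < s.+1) binZ (n%:Z - t%:Z) (k%:Z - 1) * ('C(s - t + j, s - t))%:R.
Proof.
rewrite /quot_coef PoszD; congr (_ + _); apply: eq_big_nat => t /andP[_].
rewrite ltnS => le_ts; by rewrite (subzn le_ts) -PoszD binZ_natE.
Qed.

Section QuotCoefRecursion.
Variables n k : nat.

Let binZ_pascal_sub (s m : nat) :
  binZ (n%:Z - s.+1%:Z) m.+1 + binZ (n%:Z - s.+1%:Z) m = binZ (n%:Z - s%:Z) m.+1.
Proof.
have -> : n%:Z - s%:Z = (n%:Z - s.+1%:Z) + 1 by rewrite -addn1 PoszD; ring.
by rewrite binZ_pascal.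
Qed.

Lemma quot_coefS0 (s : nat) : (1 <= k)%N -> quot_coef n k s.+1 0 = quot_coef n k s 0.
Proof.
case: k => [//|k'] _; rewrite !quot_coefE.
have -> : Posz k'.+1 - 1 = k' by rewrite -addn1 PoszD addrK.
rewrite big_nat_recr //= subnn bin0 mulr1 !expr0 !mul1r !addn0.
rewrite -(binZ_pascal_sub s k') -addrA; congr (_ + _); rewrite addrC; congr (_ + _).
by apply: eq_big_nat => t _; rewrite !addn0 !binn.
Qed.

Lemma quot_coefSS (s j : nat) :
  quot_coef n k s.+1 j.+1 - quot_coef n k s.+1 j = quot_coef n k s j.+1.
Proof.
rewrite !quot_coefE opprD addrACA -sumrB big_nat_recr //= subnn !bin0 subrr addr0.
congr (_ + _).
  by rewrite addnS -(binZ_pascal_sub s (k + j)) exprS; ring.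
apply: eq_big_nat => t /andP[_ lt_ts]; rewrite -mulrBr.
have -> : (s.+1 - t = (s - t).+1)%N by lia.
by rewrite !addSn !addnS binS natrD addrAC subrr add0r.
Qed.

Lemma fps_diff_quot_coef (s : nat) : (1 <= k)%N ->
  fps_diff (shift_series k (quot_coef n k s.+1)) = shift_series k (quot_coef n k s).
Proof.
move=> k_gt0; apply: functional_extensionality => x; rewrite /fps_diff /shift_series.
case: (ltnP x k) => [lt_xk | le_kx].
  by rewrite (leq_ltn_trans (leq_pred x) lt_xk); case: ifP; rewrite subr0.
case def_j: (x - k)%N => [|j].
  have -> : (x.-1 < k)%N by lia.
  by case: ifP => _; rewrite subr0 quot_coefS0.
have -> : (0 < x)%N by lia.
have -> : (x.-1 < k)%N = false by apply/negbTE; lia.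
have -> : (x.-1 - k)%N = j by lia.
exact: quot_coefSS.
Qed.

End QuotCoefRecursion.

Lemma shift_series_quot_coef0 (n k : nat) :
  shift_series k (quot_coef n k 0) = fps_of_poly (Qnk n k).
Proof.
apply: functional_extensionality => m; rewrite /fps_of_poly coef_Qnk /shift_series.
case: ltnP => // le_km.
by rewrite /quot_coef big_geq // addr0 subr0 -PoszD subnKC // binZ_natE.
Qed.

Lemma quot_coefP (n k s : nat) : (1 <= k)%N ->
  fps_mul (fps_of_poly ((1 - 'X) ^+ s)) (shift_series k (quot_coef n k s))
  = fps_of_poly (Qnk n k).
Proof.
move=> k_gt0; elim: s => [|s IH]; first by rewrite expr0 fps_mul1l shift_series_quot_coef0.
by rewrite exprSr fps_mul_1subX fps_diff_quot_coef.
Qed.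

Theorem proposition3p7 (n k s : nat) (hk1 : (1 <= k)%N) (hkn : (k <= n)%N) :
  let c1 := fun j : nat =>
    (-1) ^+ j * binZ (n%:Z - s%:Z) (k%:Z + j%:Z)
    + \sum_(1 <= t < s.+1)
        binZ (n%:Z - t%:Z) (k%:Z - 1) * binZ (s%:Z - t%:Z + j%:Z) (s%:Z - t%:Z) in
  let c2 := fun j : nat =>
    (-1) ^+ j * binZ (n%:Z - s%:Z) (k%:Z + j%:Z)
    + \sum_(0 <= l < k)
        binZ (j%:Z + l%:Z) l%:Z
        * binZ (n%:Z - s%:Z - j%:Z - l%:Z - 1) (k%:Z - l%:Z - 1)
        * binZ (s%:Z + j%:Z + l%:Z) (s%:Z - 1) in
  fps_mul (fps_of_poly ((1 - 'X) ^+ s)) (shift_series k c1) = fps_of_poly (Qnk n k)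
  /\ (forall j : nat, c1 j = c2 j).
Proof.
move=> c1 c2; split; first exact: quot_coefP.
by move=> j; congr (_ + _); exact: tail_sum_alt.
Qed.
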